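(* Let $\mu_0<\mu_1$, $\sigma_H>0$, $\pi,\lambda,p\in(0,1)$ fixed, and $s\in(\mu_0,\mu_1)$. Define $A(s)=1-\Phi\big((s-\mu_1)/\sigma_H\big)$, $B(s)=1-\Phi\big((s-\mu_0)/\sigma_H\big)$ (with $\Phi$ the standard normal cdf), \[ \lambda(1,\pi;s)=\frac{\lambda\,[\pi A(s)+(1-\pi)p]}{\pi\,[\lambda A(s)+(1-\lambda)B(s)]+(1-\pi)\,p},\qquad P_S(1,\pi;s)=\lambda(1,\pi;s)^2 . \] Then, holding $(s,\pi,\lambda,p,\mu_0,\mu_1)$ fixed, $\partial_{\sigma_H}\lambda(1,\pi;s)<0$ and $\partial_{\sigma_H}P_S(1,\pi;s)<0$.
   Context: Gaussian–quadratic benchmark: $s\mid(\theta,\omega)\sim\mathcal N(\mu_\omega,\sigma_\theta^2)$; $A$ and $B$ are the probabilities that the High type's signal exceeds the cutoff $s$ in states $\omega=1$ and $\omega=0$; the Low type recommends risk with signal-independent probability $p$; $\lambda(1,\pi;s)$ is the posterior that the state is good after a risky recommendation; effort with cost $c(e)=e^2/2$ is $e^*=\lambda(1,\pi;s)$; $P_S$ is the success probability. *)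

From Stdlib Require Import Reals.
From Coquelicot Require Import Coquelicot.
Open Scope R_scope.

Definition std_normal_pdf (t : R) : R := / sqrt (2 * PI) * exp (- (t ^ 2) / 2).

Definition Phi (x : R) : R :=
  RInt_gen std_normal_pdf (Rbar_locally m_infty) (at_point x).

Definition Aprob (mu1 sigH s : R) : R := 1 - Phi ((s - mu1) / sigH).
Definition Bprob (mu0 sigH s : R) : R := 1 - Phi ((s - mu0) / sigH).

Definition post_risky (mu0 mu1 pi lam p s sigH : R) : R :=
  lam * (pi * Aprob mu1 sigH s + (1 - pi) * p)
  / (pi * (lam * Aprob mu1 sigH s + (1 - lam) * Bprob mu0 sigH s) + (1 - pi) * p).

Definition succ_prob (mu0 mu1 pi lam p s sigH : R) : R :=
  (post_risky mu0 mu1 pi lam p s sigH) ^ 2.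

(* The survival probabilities A = 1 - Phi((s - mu1)/sigma) and B = 1 - Phi((s - mu0)/sigma)
   move in opposite directions as sigma grows: A decreases since s < mu1, B increases since
   s > mu0.  With N = pi A + (1 - pi) p and M = pi B + (1 - pi) p, the derivative of the posterior
   has numerator lam pi (1 - lam) (A' M - N B'), which is negative once N, M > 0; so the posterior
   decreases, and so does its (positive) square.  Positivity of N and M needs A, B >= 0, i.e.
   Phi <= 1, which comes from the Gaussian integral, evaluated by the Feynman trick
   (int_0^x e^{-t^2/2} dt)^2 + 2 int_0^1 e^{-x^2 (1+t^2)/2} / (1+t^2) dt = pi/2 for all x. *)
From Stdlib Require Import Reals Lra.
From Coquelicot Require Import Coquelicot.
Open Scope R_scope.

(* Coquelicot's [auto_derive] leaves equalities typed in [R_AbsRing], which [ring]/[field] do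
   not recognise as [R]. *)
Ltac as_R_eq := match goal with |- ?a = ?b => change (@eq R a b) end.

Definition gauss (t : R) : R := exp (- (t ^ 2) / 2).

Lemma continuous_gauss x : continuous gauss x.
Proof.
  apply (@ex_derive_continuous R_AbsRing R_NormedModule).
  unfold gauss; auto_derive; auto.
Qed.

Lemma ex_RInt_gauss a b : ex_RInt gauss a b.
Proof.
  apply (@ex_RInt_continuous R_CompleteNormedModule); intros z _.
  apply continuous_gauss.
Qed.

Definition gauss_int (x : R) : R := RInt gauss 0 x.

Lemma is_derive_gauss_int x : is_derive gauss_int x (gauss x).
Proof.
  apply (is_derive_RInt gauss gauss_int 0 x).
  - apply filter_forall; intros b. apply (RInt_correct gauss 0 b), ex_RInt_gauss.
  - apply continuous_gauss.
Qed.

Definition feynman_integrand (x t : R) : R :=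
  exp (- (x ^ 2) * (1 + t ^ 2) / 2) / (1 + t ^ 2).

Definition feynman (x : R) : R := RInt (feynman_integrand x) 0 1.

Lemma is_derive_feynman_integrand x t :
  is_derive (fun y => feynman_integrand y t) x (- x * exp (- (x ^ 2) * (1 + t ^ 2) / 2)).
Proof.
  assert (Ht : 0 < 1 + t ^ 2) by nra.
  unfold feynman_integrand. auto_derive; [lra |].
  as_R_eq. unfold Rdiv; simpl. field. lra.
Qed.

Lemma continuous_feynman_integrand x t : continuous (feynman_integrand x) t.
Proof.
  assert (Ht : 0 < 1 + t ^ 2) by nra.
  apply (@ex_derive_continuous R_AbsRing R_NormedModule).
  unfold feynman_integrand; auto_derive; lra.
Qed.

Lemma ex_RInt_feynman_integrand x a b : ex_RInt (feynman_integrand x) a b.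
Proof.
  apply (@ex_RInt_continuous R_CompleteNormedModule); intros z _.
  apply continuous_feynman_integrand.
Qed.

Lemma continuity_2d_Derive_feynman_integrand x t :
  continuity_2d_pt (fun u v => Derive (fun y => feynman_integrand y v) u) x t.
Proof.
  apply continuity_2d_pt_ext with
    (f := fun u v => - u * exp (- (u ^ 2) * (1 + v ^ 2) / 2)).
  { intros u v. symmetry. apply is_derive_unique, is_derive_feynman_integrand. }
  apply continuity_2d_pt_mult.
  - apply continuity_2d_pt_opp, continuity_2d_pt_id1.
  - apply (continuity_1d_2d_pt_comp exp (fun u v => - u ^ 2 * (1 + v ^ 2) / 2)).
    + apply derivable_continuous_pt, derivable_pt_exp.
    + apply continuity_2d_pt_ext with (f := fun u v => - (u * u) * ((1 + v * v) * / 2)).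
      { intros u v. field. }
      apply continuity_2d_pt_mult.
      * apply continuity_2d_pt_opp, continuity_2d_pt_mult; apply continuity_2d_pt_id1.
      * apply continuity_2d_pt_mult; [| apply continuity_2d_pt_const].
        apply continuity_2d_pt_plus; [apply continuity_2d_pt_const |].
        apply continuity_2d_pt_mult; apply continuity_2d_pt_id2.
Qed.

(* The differentiated integrand is [- gauss x * (x * gauss (x t))]; substitute [u = x t]. *)
Lemma is_derive_feynman x : is_derive feynman x (- gauss x * gauss_int x).
Proof.
  replace (- gauss x * gauss_int x)
    with (RInt (fun t => Derive (fun y => feynman_integrand y t) x) 0 1).
  - apply is_derive_RInt_param.
    + apply filter_forall; intros y t _. eexists. apply is_derive_feynman_integrand.
    + intros t _. apply continuity_2d_Derive_feynman_integrand.
    + apply filter_forall; intros y. apply ex_RInt_feynman_integrand.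
  - rewrite (RInt_ext _ (fun t => - gauss x * (x * gauss (x * t + 0)))).
    + transitivity (- gauss x * RInt (fun t => x * gauss (x * t + 0)) 0 1).
      * apply (RInt_scal (fun t => x * gauss (x * t + 0))).
        apply (@ex_RInt_continuous R_CompleteNormedModule); intros z _.
        apply (@ex_derive_continuous R_AbsRing R_NormedModule).
        unfold gauss; auto_derive; auto.
      * unfold gauss_int. f_equal.
        etransitivity; [apply (RInt_comp_lin gauss x 0 0 1 (ex_RInt_gauss _ _)) |].
        f_equal; ring.
    + intros t _. etransitivity; [apply is_derive_unique, is_derive_feynman_integrand |].
      unfold gauss. replace (x * t + 0) with (x * t) by ring.
      replace (- x ^ 2 * (1 + t ^ 2) / 2) with (- x ^ 2 / 2 + - (x * t) ^ 2 / 2) by field.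
      rewrite exp_plus. as_R_eq. ring.
Qed.

Lemma feynman_0 : feynman 0 = PI / 4.
Proof.
  unfold feynman. replace (PI / 4) with (atan 1 - atan 0) by (rewrite atan_1, atan_0; ring).
  apply is_RInt_unique, (is_RInt_ext (fun t => / (1 + t²))).
  - intros t _. unfold feynman_integrand.
    replace (- 0 ^ 2 * (1 + t ^ 2) / 2) with 0 by (as_R_eq; field).
    rewrite exp_0. unfold Rsqr. as_R_eq. field. nra.
  - apply (is_RInt_derive atan (fun t => / (1 + t²))).
    + intros y _. apply is_derive_atan.
    + intros y _. apply (@ex_derive_continuous R_AbsRing R_NormedModule).
      unfold Rsqr. auto_derive. nra.
Qed.

Lemma feynman_ge0 x : 0 <= feynman x.
Proof.
  apply RInt_ge_0; [lra | apply ex_RInt_feynman_integrand |].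
  intros t _. unfold feynman_integrand.
  apply Rlt_le, Rdiv_lt_0_compat; [apply exp_pos | nra].
Qed.

Lemma gauss_int_sqr_add_feynman x : gauss_int x ^ 2 + 2 * feynman x = PI / 2.
Proof.
  set (G y := gauss_int y ^ 2 + 2 * feynman y).
  assert (DG : forall y, is_derive G y 0).
  { intros y.
    assert (D := is_derive_plus _ _ y _ _
      (is_derive_pow gauss_int 2 y _ (is_derive_gauss_int y))
      (is_derive_scal feynman y 2 _ (is_derive_feynman y))).
    replace 0 with (plus (INR 2 * gauss y * gauss_int y ^ Init.Nat.pred 2)
                         (2 * (- gauss y * gauss_int y))); [exact D |].
    simpl. unfold plus; simpl. as_R_eq. ring. }
  assert (G0 : G 0 = PI / 2).
  { unfold G, gauss_int. rewrite feynman_0, RInt_point. unfold zero; simpl. field. }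
  rewrite <- G0. fold (G x).
  destruct (MVT_gen G 0 x (fun _ => 0)) as [c [_ Hc]].
  - intros y _. apply DG.
  - intros y _. apply continuity_pt_filterlim.
    apply (@ex_derive_continuous R_AbsRing R_NormedModule). eexists. apply DG.
  - lra.
Qed.

Lemma gauss_int_sqr_le x : gauss_int x ^ 2 <= PI / 2.
Proof. generalize (gauss_int_sqr_add_feynman x) (feynman_ge0 x). lra. Qed.

Lemma std_normal_pdf_pos t : 0 < std_normal_pdf t.
Proof.
  apply Rmult_lt_0_compat; [| apply exp_pos].
  apply Rinv_0_lt_compat, sqrt_lt_R0. generalize PI_RGT_0. lra.
Qed.

Lemma continuous_std_normal_pdf x : continuous std_normal_pdf x.
Proof.
  apply (@ex_derive_continuous R_AbsRing R_NormedModule).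
  unfold std_normal_pdf; auto_derive; auto.
Qed.

Lemma ex_RInt_std_normal_pdf a b : ex_RInt std_normal_pdf a b.
Proof.
  apply (@ex_RInt_continuous R_CompleteNormedModule); intros z _.
  apply continuous_std_normal_pdf.
Qed.

Definition normal_int (x : R) : R := RInt std_normal_pdf 0 x.

Lemma is_derive_normal_int x : is_derive normal_int x (std_normal_pdf x).
Proof.
  apply (is_derive_RInt std_normal_pdf normal_int 0 x).
  - apply filter_forall; intros b.
    apply (RInt_correct std_normal_pdf 0 b), ex_RInt_std_normal_pdf.
  - apply continuous_std_normal_pdf.
Qed.

Lemma normal_int_sub u v : normal_int v - normal_int u = RInt std_normal_pdf u v.
Proof.
  unfold normal_int.
  rewrite <- (RInt_Chasles std_normal_pdf 0 u v) by apply ex_RInt_std_normal_pdf.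
  unfold plus; simpl. ring.
Qed.

Lemma normal_int_bounds x : - / 2 <= normal_int x <= / 2.
Proof.
  assert (Hpi := PI_RGT_0).
  assert (Hsq : normal_int x ^ 2 = gauss_int x ^ 2 / (2 * PI)).
  { replace (normal_int x) with (/ sqrt (2 * PI) * gauss_int x)
      by (symmetry; apply (RInt_scal gauss 0 x), ex_RInt_gauss).
    rewrite <- (sqrt_sqrt (2 * PI)) at 2 by lra.
    assert (0 < sqrt (2 * PI)) by (apply sqrt_lt_R0; lra).
    field. lra. }
  assert (normal_int x ^ 2 <= / 4).
  { rewrite Hsq. apply (Rmult_le_reg_r (2 * PI)); [lra |].
    unfold Rdiv. rewrite Rmult_assoc, Rinv_l by lra.
    generalize (gauss_int_sqr_le x). lra. }
  nra.
Qed.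

Lemma std_normal_pdf_le_exp t : t <= -2 -> std_normal_pdf t <= exp t.
Proof.
  intros Ht. unfold std_normal_pdf.
  assert (Hs : 1 <= sqrt (2 * PI)).
  { rewrite <- sqrt_1. apply sqrt_le_1_alt. generalize PI2_1. lra. }
  assert (0 < / sqrt (2 * PI) <= 1).
  { split; [apply Rinv_0_lt_compat; lra |].
    rewrite <- Rinv_1. apply Rinv_le_contravar; lra. }
  assert (exp (- t ^ 2 / 2) <= exp t).
  { destruct (Rle_lt_or_eq_dec (- t ^ 2 / 2) t) as [Hlt | ->]; [nra | | lra].
    apply Rlt_le, exp_increasing, Hlt. }
  generalize (exp_pos (- t ^ 2 / 2)). nra.
Qed.

Lemma RInt_std_normal_pdf_tail u v :
  u <= v -> v <= -2 -> 0 <= RInt std_normal_pdf u v <= exp v.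
Proof.
  intros Huv Hv. split.
  - apply RInt_ge_0; [exact Huv | apply ex_RInt_std_normal_pdf |].
    intros; apply Rlt_le, std_normal_pdf_pos.
  - apply Rle_trans with (RInt exp u v).
    + apply RInt_le; [exact Huv | apply ex_RInt_std_normal_pdf | |].
      * apply (@ex_RInt_continuous R_CompleteNormedModule); intros z _.
        apply (@ex_derive_continuous R_AbsRing R_NormedModule). auto_derive. auto.
      * intros x Hx. apply std_normal_pdf_le_exp. lra.
    + rewrite (is_RInt_unique exp u v (exp v - exp u)).
      * generalize (exp_pos u). lra.
      * apply (is_RInt_derive exp exp).
        -- intros x _. apply is_derive_exp.
        -- intros x _. apply (@ex_derive_continuous R_AbsRing R_NormedModule).
           auto_derive. auto.
Qed.

(* Cauchy criterion at -oo: the Gaussian tail below [v <= -2] has mass at most [exp v]. *)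
Lemma normal_int_cvg_m_infty :
  exists L, filterlim normal_int (Rbar_locally m_infty) (locally L).
Proof.
  apply (@filterlim_locally_cauchy R R_CompleteSpace _ (Rbar_locally_filter m_infty)).
  intros eps.
  exists (fun x => x < Rmin (-2) (ln eps)). split; [exists (Rmin (-2) (ln eps)); auto |].
  intros u v Hu Hv.
  assert (Ha1 := Rmin_l (-2) (ln eps)). assert (Ha2 := Rmin_r (-2) (ln eps)).
  assert (He : exp (ln eps) = eps) by (apply exp_ln, cond_pos).
  change (Rabs (normal_int v - normal_int u) < eps).
  rewrite normal_int_sub.
  destruct (Rle_dec u v) as [Huv | Huv].
  - destruct (RInt_std_normal_pdf_tail u v Huv ltac:(lra)).
    assert (exp v < exp (ln eps)) by (apply exp_increasing; lra).
    rewrite Rabs_pos_eq; lra.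
  - rewrite <- opp_RInt_swap by apply ex_RInt_std_normal_pdf.
    destruct (RInt_std_normal_pdf_tail v u ltac:(lra) ltac:(lra)).
    assert (exp u < exp (ln eps)) by (apply exp_increasing; lra).
    unfold opp; simpl. rewrite Rabs_Ropp, Rabs_pos_eq; lra.
Qed.

Lemma Phi_normal_int : exists L, - / 2 <= L /\ forall x, Phi x = normal_int x - L.
Proof.
  destruct normal_int_cvg_m_infty as [L HL]. exists L. split.
  - apply (filterlim_le (F := Rbar_locally m_infty) (fun _ => - / 2) normal_int (- / 2) L).
    + apply filter_forall; intros x. apply normal_int_bounds.
    + apply filterlim_const.
    + exact HL.
  - intros x. unfold Phi. apply is_RInt_gen_unique.
    apply (@is_RInt_gen_ext R_NormedModule _ _ _ _ (Derive normal_int)).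
    + apply filter_forall; intros ab t _. apply is_derive_unique, is_derive_normal_int.
    + apply (@is_RInt_gen_Derive _ _ _ _).
      * apply filter_forall; intros ab t _. eexists. apply is_derive_normal_int.
      * apply filter_forall; intros ab t _.
        apply (continuous_ext std_normal_pdf); [| apply continuous_std_normal_pdf].
        intros y. symmetry. apply is_derive_unique, is_derive_normal_int.
      * exact HL.
      * intros P HP. apply (locally_singleton (normal_int x) P HP).
Qed.

Lemma is_derive_Phi x : is_derive Phi x (std_normal_pdf x).
Proof.
  destruct Phi_normal_int as [L [_ HPhi]].
  apply (is_derive_ext (fun y => normal_int y - L)); [intros y; symmetry; apply HPhi |].
  replace (std_normal_pdf x) with (minus (std_normal_pdf x) 0)
    by (unfold minus, plus, opp, zero; simpl; ring).
  exact (is_derive_minus _ _ x _ _ (is_derive_normal_int x) (is_derive_const L x)).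
Qed.

Lemma Phi_le_1 x : Phi x <= 1.
Proof.
  destruct Phi_normal_int as [L [HL HPhi]]. rewrite HPhi.
  generalize (normal_int_bounds x). lra.
Qed.

Lemma is_derive_survival c x : x <> 0 ->
  is_derive (fun sg => 1 - Phi (c / sg)) x (std_normal_pdf (c / x) * (c / x ^ 2)).
Proof.
  intros Hx.
  assert (Dq : is_derive (fun sg => c / sg) x (- c / x ^ 2))
    by (auto_derive; [exact Hx | as_R_eq; field; exact Hx]).
  assert (D := is_derive_minus _ _ x _ _ (is_derive_const 1 x)
                 (is_derive_comp Phi _ x _ _ (is_derive_Phi (c / x)) Dq)).
  replace (std_normal_pdf (c / x) * (c / x ^ 2))
    with (minus 0 (scal (- c / x ^ 2) (std_normal_pdf (c / x)))); [exact D |].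
  unfold minus, plus, opp, zero, scal; simpl. unfold mult; simpl. field. exact Hx.
Qed.

Definition posterior (lam pi p a b : R) : R :=
  lam * (pi * a + (1 - pi) * p) / (pi * (lam * a + (1 - lam) * b) + (1 - pi) * p).

Section Posterior.

Variables lam pi p : R.
Hypotheses (Hlam : 0 < lam < 1) (Hpi : 0 < pi < 1) (Hp : 0 < p).

Lemma posterior_pos a b : 0 <= a -> 0 <= b -> 0 < posterior lam pi p a b.
Proof.
  intros Ha Hb. unfold posterior.
  assert (0 <= lam * a + (1 - lam) * b) by nra.
  apply Rdiv_lt_0_compat; [apply Rmult_lt_0_compat |]; nra.
Qed.

Lemma posterior_derive_neg (A B : R -> R) x dA dB :
  0 <= A x -> 0 <= B x -> is_derive A x dA -> is_derive B x dB -> dA < 0 -> 0 < dB ->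
  exists d, is_derive (fun y => posterior lam pi p (A y) (B y)) x d /\ d < 0.
Proof.
  intros HA HB DA DB HdA HdB.
  set (N := pi * A x + (1 - pi) * p). set (M := pi * B x + (1 - pi) * p).
  set (Den := pi * (lam * A x + (1 - lam) * B x) + (1 - pi) * p).
  assert (N0 : 0 < N) by (unfold N; nra).
  assert (M0 : 0 < M) by (unfold M; nra).
  assert (Den0 : 0 < Den).
  { replace Den with (lam * N + (1 - lam) * M) by (unfold Den, N, M; ring). nra. }
  assert (DNum : is_derive (fun y => lam * (pi * A y + (1 - pi) * p)) x (lam * (pi * dA)))
    by (auto_derive; [eexists; eassumption |
        replace (Derive (fun y => A y) x) with dA by (symmetry; apply is_derive_unique, DA);
        as_R_eq; ring]).
  assert (DDen : is_derive (fun y => pi * (lam * A y + (1 - lam) * B y) + (1 - pi) * p) x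
                   (pi * (lam * dA + (1 - lam) * dB))).
  { auto_derive; [repeat split; eexists; eassumption |].
    replace (Derive (fun y => A y) x) with dA by (symmetry; apply is_derive_unique, DA).
    replace (Derive (fun y => B y) x) with dB by (symmetry; apply is_derive_unique, DB).
    as_R_eq. ring. }
  eexists. split; [exact (is_derive_div _ _ x _ _ DNum DDen ltac:(cbv beta; fold Den; lra)) |].
  cbv beta. fold Den N.
  assert (Hnum : lam * (pi * dA) * Den - lam * N * (pi * (lam * dA + (1 - lam) * dB))
                 = lam * pi * (1 - lam) * (dA * M - N * dB))
    by (unfold Den, N, M; ring).
  rewrite Hnum.
  apply Rdiv_neg_pos; [| apply pow_lt; lra].
  assert (0 < lam * pi * (1 - lam)) by (apply Rmult_lt_0_compat; [apply Rmult_lt_0_compat |]; lra).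
  assert (dA * M < 0) by nra. assert (0 < N * dB) by nra. nra.
Qed.

End Posterior.

Lemma is_derive_sqr_neg (f : R -> R) x d : is_derive f x d -> d < 0 -> 0 < f x ->
  exists d', is_derive (fun y => f y ^ 2) x d' /\ d' < 0.
Proof.
  intros Df Hd Hf. eexists. split; [exact (is_derive_pow f 2 x d Df) |]. simpl. nra.
Qed.

Theorem lemmaD5 (mu0 mu1 sigH pi lam p s : R) :
  mu0 < mu1 -> 0 < sigH ->
  0 < pi < 1 -> 0 < lam < 1 -> 0 < p < 1 ->
  mu0 < s < mu1 ->
  (exists d, is_derive (fun sg => post_risky mu0 mu1 pi lam p s sg) sigH d /\ d < 0) /\
  (exists d, is_derive (fun sg => succ_prob mu0 mu1 pi lam p s sg) sigH d /\ d < 0).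
Proof.
  intros _ Hsg Hpi Hlam Hp Hs.
  assert (Hsg2 : 0 < sigH ^ 2) by (apply pow_lt; lra).
  assert (A_ge0 : 0 <= Aprob mu1 sigH s)
    by (generalize (Phi_le_1 ((s - mu1) / sigH)); unfold Aprob; lra).
  assert (B_ge0 : 0 <= Bprob mu0 sigH s)
    by (generalize (Phi_le_1 ((s - mu0) / sigH)); unfold Bprob; lra).
  assert (DA := is_derive_survival (s - mu1) sigH ltac:(lra)).
  assert (DB := is_derive_survival (s - mu0) sigH ltac:(lra)).
  assert (dA_neg : std_normal_pdf ((s - mu1) / sigH) * ((s - mu1) / sigH ^ 2) < 0).
  { assert ((s - mu1) / sigH ^ 2 < 0) by (apply Rdiv_neg_pos; lra).
    generalize (std_normal_pdf_pos ((s - mu1) / sigH)). nra. }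
  assert (dB_pos : 0 < std_normal_pdf ((s - mu0) / sigH) * ((s - mu0) / sigH ^ 2)).
  { apply Rmult_lt_0_compat; [apply std_normal_pdf_pos | apply Rdiv_lt_0_compat; lra]. }
  destruct (posterior_derive_neg lam pi p Hlam Hpi (proj1 Hp)
              (fun sg => Aprob mu1 sg s) (fun sg => Bprob mu0 sg s) sigH _ _
              A_ge0 B_ge0 DA DB dA_neg dB_pos) as [d [Dpost Hd]].
  split; [exists d; split; assumption |].
  apply (is_derive_sqr_neg _ _ d Dpost Hd).
  apply (posterior_pos lam pi p Hlam Hpi (proj1 Hp)); assumption.
Qed.
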